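(* Let $\mathcal X$ and $\mathcal Y$ be polytopes with $p$ and $q$ vertices respectively, and let $\mathcal L(x,y)=x^\top My$ for a matrix $M$. Then the SP-FW algorithm with step size $\gamma_t=\frac1{t+1}$ satisfies $h(z^{(t)})=O\big(t^{-\frac1{p+q-2}}\big)$.
   Context: SP-FW algorithm: start from $z^{(0)}\in\mathcal X\times\mathcal Y$; at iteration $t$ compute $r^{(t)}:=(\nabla_x\mathcal L(z^{(t)}),-\nabla_y\mathcal L(z^{(t)}))$, $s^{(t)}\in\arg\min_{s\in\mathcal X\times\mathcal Y}\langle s,r^{(t)}\rangle$, and set $z^{(t+1)}:=(1-\gamma_t)z^{(t)}+\gamma_ts^{(t)}$. For $z=(x,y)$, $h(z):=\max_{y'\in\mathcal Y}\mathcal L(x,y')-\min_{x'\in\mathcal X}\mathcal L(x',y)$. *)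

From HB Require Import structures.
From mathcomp Require Import all_boot all_order all_algebra.
From mathcomp Require Import all_classical all_reals all_analysis.
Set Implicit Arguments. Unset Strict Implicit. Unset Printing Implicit Defensive.
Import Order.TTheory GRing.Theory Num.Theory.
Local Open Scope classical_set_scope.
Local Open Scope ring_scope.

Section SPFW.
Variable R : realType.

Definition dotv (n : nat) (a b : 'cV[R]_n) : R := (a^T *m b) 0 0.

Definition conv_hull (n p : nat) (v : 'I_p -> 'cV[R]_n) : set 'cV[R]_n :=
  [set x | exists w : 'I_p -> R,
     (forall i, 0 <= w i) /\ \sum_(i < p) w i = 1 /\
     x = \sum_(i < p) w i *: v i].

(* Each v i is a vertex of conv_hull v: it is not a convex combination of
   the other points v j (j <> i).  Hence conv_hull v is a polytope with
   exactly p (distinct) vertices v 0, ..., v (p-1). *)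
Definition vertices_of_hull (n p : nat) (v : 'I_p -> 'cV[R]_n) : Prop :=
  forall i : 'I_p, ~ exists w : 'I_p -> R,
     (forall j, 0 <= w j) /\ w i = 0 /\ \sum_(j < p) w j = 1 /\
     v i = \sum_(j < p) w j *: v j.

Definition bilin (n m : nat) (M : 'M[R]_(n, m)) (x : 'cV[R]_n) (y : 'cV[R]_m) : R :=
  (x^T *m M *m y) 0 0.

Definition gap (n m : nat) (M : 'M[R]_(n, m)) (X : set 'cV[R]_n) (Y : set 'cV[R]_m)
  (x : 'cV[R]_n) (y : 'cV[R]_m) : R :=
  sup [set bilin M x y' | y' in Y] - inf [set bilin M x' y | x' in X].

(* Here grad_x L(x,y) = M y and grad_y L(x,y) = M^T x, so
   r^(t) = (M y_t, - M^T x_t) and <(a,b), r^(t)> = <a, M y_t> - <b, M^T x_t>.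
   (sx t, sy t) is any minimizer of <s, r^(t)> over X x Y. *)
Definition spfw_run (n m : nat) (M : 'M[R]_(n, m)) (X : set 'cV[R]_n) (Y : set 'cV[R]_m)
  (x : nat -> 'cV[R]_n) (y : nat -> 'cV[R]_m)
  (sx : nat -> 'cV[R]_n) (sy : nat -> 'cV[R]_m) : Prop :=
  X (x 0%N) /\ Y (y 0%N) /\
  forall t : nat,
    [/\ X (sx t), Y (sy t),
        (forall a b, X a -> Y b ->
           dotv (sx t) (M *m y t) - dotv (sy t) (M^T *m x t)
           <= dotv a (M *m y t) - dotv b (M^T *m x t)),
        x t.+1 = (1 - (t.+1%:R)^-1) *: x t + (t.+1%:R)^-1 *: sx t &
        y t.+1 = (1 - (t.+1%:R)^-1) *: y t + (t.+1%:R)^-1 *: sy t].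

End SPFW.

From mathcomp Require Import all_boot all_order all_algebra.
From mathcomp Require Import all_classical all_reals all_analysis.
From mathcomp Require Import ring lra zify.
Import Order.TTheory GRing.Theory Num.Theory.
Local Open Scope ring_scope.

Set Implicit Arguments. Unset Strict Implicit. Unset Printing Implicit Defensive.

(* With step sizes 1/(t+1), t x_t and t y_t are sums of vertices returned by
   the linear minimization oracle, so SP-FW on a bilinear game over polytopes
   is fictitious play on the p x q payoff matrix A_ij = L(vX_j, vY_i).  The
   accumulated payoffs V_t(i) = t L(x_t, vY_i) and U_t(j) = t L(vX_j, y_t)
   form a vector system in the sense of Robinson, and t h(x_t, y_t) is at most
   the spread max_i V_t(i) - min_j U_t(j).  Robinson's induction on the number
   k of rows and columns bounds the spread by O(t^(1 - 1/(k-2))): on a window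
   of N^(k-2) steps either some row is never a best reply (or some column
   never is), and the smaller system controls the growth, or every row and
   column is a best reply at some time, and then the zero-sum identity keeps
   all spreads within O(N^(k-2)) of their weighted average, which never
   exceeds the initial bound. *)

Section Robinson.
Variable R : realFieldType.

Lemma convex_sum_le (T : finType) (c f : T -> R) b :
  (forall i, 0 <= c i) -> \sum_i c i = 1 -> (forall i, c i != 0 -> f i <= b) ->
  \sum_i c i * f i <= b.
Proof.
move=> c0 c1 cf.
apply: (@le_trans _ _ (\sum_i c i * b)); last by rewrite -mulr_suml c1 mul1r.
apply: ler_sum => i _; have [->|nz] := eqVneq (c i) 0; first by rewrite !mul0r.
by rewrite ler_wpM2l // cf.
Qed.

Lemma convex_sum_ge (T : finType) (c f : T -> R) b :
  (forall i, 0 <= c i) -> \sum_i c i = 1 -> (forall i, c i != 0 -> b <= f i) ->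
  b <= \sum_i c i * f i.
Proof.
move=> c0 c1 cf; rewrite -lerN2 -sumrN.
under eq_bigr do rewrite -mulrN.
by apply: convex_sum_le => // i /cf; rewrite lerN2.
Qed.

Lemma norm_convex_sum_le (T : finType) (c f : T -> R) b :
  (forall i, 0 <= c i) -> \sum_i c i = 1 -> (forall i, `|f i| <= b) ->
  `|\sum_i f i * c i| <= b.
Proof.
move=> c0 c1 fb; apply: le_trans (ler_norm_sum _ _ _) _.
apply: (@le_trans _ _ (\sum_i c i * b)); last by rewrite -mulr_suml c1 mul1r.
apply: ler_sum => i _; rewrite normrM (ger0_norm (c0 i)) mulrC.
by rewrite ler_wpM2l.
Qed.

Lemma exists_norm_bound (T1 T2 : finType) (A : T1 -> T2 -> R) :
  exists2 a, 0 <= a & forall i j, `|A i j| <= a.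
Proof.
exists (\sum_i \sum_j `|A i j|); first by apply: sumr_ge0 => i _; apply: sumr_ge0.
move=> i j; rewrite (bigD1 i) //= (bigD1 j) //= -addrA lerDl.
by rewrite addr_ge0 // sumr_ge0 // => *; rewrite sumr_ge0.
Qed.

Lemma sum_pair_diff (T1 T2 : finType) (X : T1 -> R) (Y : T2 -> R) f g :
  \sum_i \sum_j X i * Y j * (f i - g j) =
  (\sum_j Y j) * (\sum_i X i * f i) - (\sum_i X i) * (\sum_j Y j * g j).
Proof.
rewrite mulr_sumr mulr_suml -sumrB; apply: eq_bigr => i _.
rewrite mulr_suml mulr_sumr -sumrB; apply: eq_bigr => j _; ring.
Qed.

Lemma sum_pair_const (T1 T2 : finType) (X : T1 -> R) (Y : T2 -> R) c :
  \sum_i \sum_j X i * Y j * c = (\sum_i X i) * (\sum_j Y j) * c.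
Proof.
rewrite -mulrA mulr_suml; apply: eq_bigr => i _.
by rewrite mulr_suml mulr_sumr; apply: eq_bigr => j _; rewrite mulrA.
Qed.

Lemma ler_sum_pair (T1 T2 : finType) (I : {set T1}) (J : {set T2})
    (X : T1 -> R) (Y : T2 -> R) (f g : T1 -> T2 -> R) :
  (forall i, 0 <= X i) -> (forall j, 0 <= Y j) ->
  (forall i, i \notin I -> X i = 0) -> (forall j, j \notin J -> Y j = 0) ->
  (forall i j, i \in I -> j \in J -> f i j <= g i j) ->
  \sum_i \sum_j X i * Y j * f i j <= \sum_i \sum_j X i * Y j * g i j.
Proof.
move=> X0 Y0 XI YJ fg; apply: ler_sum => i _; apply: ler_sum => j _.
have [Hi|Hi] := boolP (i \in I); last by rewrite XI // !mul0r.
have [Hj|Hj] := boolP (j \in J); last by rewrite YJ // mulr0 !mul0r.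
by rewrite ler_wpM2l ?mulr_ge0 ?fg.
Qed.

Definition occupation (T : finType) (w : nat -> T -> R) (t : nat) (i : T) : R :=
  \sum_(tau < t) w tau i.

Lemma occupation_ge0 (T : finType) (w : nat -> T -> R) t i :
  (forall tau, (tau < t)%N -> 0 <= w tau i) -> 0 <= occupation w t i.
Proof. by move=> w0; apply: sumr_ge0 => tau _; apply: w0. Qed.

Lemma occupation_eq0 (T : finType) (w : nat -> T -> R) t i :
  (forall tau, (tau < t)%N -> w tau i = 0) -> occupation w t i = 0.
Proof. by move=> w0; apply: big1 => tau _; apply: w0. Qed.

Lemma sum_occupation (T : finType) (w : nat -> T -> R) t :
  (forall tau, (tau < t)%N -> \sum_i w tau i = 1) -> \sum_i occupation w t i = t%:R.
Proof.
move=> w1; rewrite exchange_big /= (eq_bigr (fun _ => 1)) => [|tau _]; last exact: w1.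
by rewrite sumr_const card_ord.
Qed.

Lemma occupationS (T : finType) (w : nat -> T -> R) t i :
  occupation w t.+1 i = occupation w t i + w t i.
Proof. by rewrite /occupation big_ord_recr. Qed.

Definition maximal_in_window (T : finType) (X : {set T}) (F : nat -> T -> R)
    (s L : nat) (i : T) : Prop :=
  exists2 tau, (s <= tau <= s + L)%N & forall i', i' \in X -> F tau i' <= F tau i.

Record vector_system (T1 T2 : finType) (A : T1 -> T2 -> R)
    (I : {set T1}) (J : {set T2}) (V : nat -> T1 -> R) (U : nat -> T2 -> R)
    (w : nat -> T1 -> R) (u : nat -> T2 -> R) (H : nat) : Prop := VectorSystem {
  w_ge0 : forall t i, (t < H)%N -> 0 <= w t i;
  w_out : forall t i, (t < H)%N -> i \notin I -> w t i = 0;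
  w_sum1 : forall t, (t < H)%N -> \sum_i w t i = 1;
  w_argmax : forall t i i', (t < H)%N -> w t i != 0 -> i' \in I -> V t i' <= V t i;
  u_ge0 : forall t j, (t < H)%N -> 0 <= u t j;
  u_out : forall t j, (t < H)%N -> j \notin J -> u t j = 0;
  u_sum1 : forall t, (t < H)%N -> \sum_j u t j = 1;
  u_argmin : forall t j j', (t < H)%N -> u t j != 0 -> j' \in J -> U t j <= U t j';
  V_step : forall t i, (t < H)%N -> V t.+1 i = V t i + \sum_j A i j * u t j;
  U_step : forall t j, (t < H)%N -> U t.+1 j = U t j + \sum_i w t i * A i j
}.

Definition spread_le (T1 T2 : finType) (I : {set T1}) (J : {set T2})
    (V : nat -> T1 -> R) (U : nat -> T2 -> R) (t : nat) (K : R) : Prop :=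
  forall i j, i \in I -> j \in J -> V t i - U t j <= K.

Section VectorSystem.
Variables (T1 T2 : finType) (A : T1 -> T2 -> R) (I : {set T1}) (J : {set T2}).
Variables (V : nat -> T1 -> R) (U : nat -> T2 -> R) (w : nat -> T1 -> R) (u : nat -> T2 -> R).

Lemma spread_leW t K K' : K <= K' -> spread_le I J V U t K -> spread_le I J V U t K'.
Proof. by move=> KK' b i j Hi Hj; apply: le_trans (b i j Hi Hj) KK'. Qed.

Lemma vector_system_dual H : vector_system A I J V U w u H ->
  vector_system (fun j i => - A i j) J I (fun t j => - U t j) (fun t i => - V t i) u w H.
Proof.
case=> wg wo ws wb ug uo us ub Vs Us; split => //.
- by move=> t j j' lt nz Hj'; rewrite lerN2; apply: ub.
- by move=> t i i' lt nz Hi'; rewrite lerN2; apply: wb.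
- move=> t j lt; rewrite Us // opprD -sumrN.
  by congr (_ + _); apply: eq_bigr => i _; rewrite mulNr mulrC.
- move=> t i lt; rewrite Vs // opprD -sumrN.
  by congr (_ + _); apply: eq_bigr => j _; rewrite mulrN mulrC.
Qed.

Lemma spread_le_dual t K :
  spread_le J I (fun t j => - U t j) (fun t i => - V t i) t K <-> spread_le I J V U t K.
Proof. by split => b i j Hi Hj; have := b j i Hj Hi; lra. Qed.

Variables (H : nat) (a : R).
Hypothesis S : vector_system A I J V U w u H.
Hypothesis A_le : forall i j, `|A i j| <= a.

Lemma V_drift tau d i : (tau + d <= H)%N -> `|V (tau + d) i - V tau i| <= d%:R * a.
Proof.
elim: d => [|d IHd] le; first by rewrite addn0 subrr normr0 mul0r.
have lt : (tau + d < H)%N by rewrite -addnS.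
have step : `|\sum_j A i j * u (tau + d) j| <= a.
  by apply: norm_convex_sum_le => [j||j]; [apply: (u_ge0 S) | apply: (u_sum1 S) | ].
rewrite addnS (V_step S) // addrAC; apply: le_trans (ler_normD _ _) _.
by rewrite -natr1 mulrDl mul1r lerD // IHd // (ltnW lt).
Qed.

Lemma V_cumul t i : (t <= H)%N -> V t i = V 0 i + \sum_j A i j * occupation u t j.
Proof.
elim: t => [|t IHt] le.
  by rewrite big1 ?addr0 // => j _; rewrite /occupation big_ord0 mulr0.
rewrite (V_step S) // IHt ?(ltnW le) // -addrA -big_split.
by congr (_ + _); apply: eq_bigr => j _; rewrite occupationS mulrDr.
Qed.

(* With a single row [i0], the lag [V t.+1 i0 - U t j] stays below [K + a]:
   a column [j0] chosen at time [t.+1] is minimal, and what it adds to the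
   row is exactly what it gained itself at time [t]. *)
Lemma spread_le_single_row K : (#|I| <= 1)%N -> 0 <= a ->
  spread_le I J V U 0 K -> forall t, (t <= H)%N -> spread_le I J V U t (K + 2 * a).
Proof.
move=> /card_le1_eqP I1 a0 b0 t tH i0 j Hi0 Hj.
have w_col t' j' : (t' < H)%N -> \sum_i w t' i * A i j' = A i0 j'.
  move=> lt; have wz i : i != i0 -> w t' i = 0.
    by move=> ne; apply: (w_out S lt); apply: contra ne => Hi; rewrite (I1 i0 i).
  have w1 : w t' i0 = 1.
    by rewrite -(w_sum1 S lt) (bigD1 i0) //= big1 ?addr0 // => i /wz.
  by rewrite (bigD1 i0) //= big1 ?addr0 ?w1 ?mul1r // => i /wz ->; rewrite mul0r.
have next t' : (t'.+1 <= H)%N -> forall j', j' \in J -> V t'.+1 i0 - U t' j' <= K + a.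
  elim: t' => [|t' IHt] lt j' Hj'.
    have : `|\sum_j A i0 j * u 0 j| <= a.
      by apply: norm_convex_sum_le => [j''||j'']; [apply: (u_ge0 S) | apply: (u_sum1 S) |].
    rewrite (V_step S) // ler_norml => /andP[_ h]; have := b0 i0 j' Hi0 Hj'; lra.
  have -> : V t'.+2 i0 - U t'.+1 j' =
      \sum_j0 u t'.+1 j0 * (V t'.+1 i0 + A i0 j0 - U t'.+1 j').
    rewrite (eq_bigr (fun j0 => u t'.+1 j0 * (V t'.+1 i0 - U t'.+1 j') + A i0 j0 * u t'.+1 j0));
      last by move=> j0 _; ring.
    by rewrite big_split /= -mulr_suml (u_sum1 S lt) mul1r (V_step S) //; ring.
  apply: convex_sum_le => [j0||j0 nz]; [exact: (u_ge0 S) | exact: (u_sum1 S) |].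
  have Hj0 : j0 \in J by apply: contraNT nz => /(u_out S lt) ->.
  have lt' : (t' < H)%N by apply: ltnW.
  have := u_argmin S lt nz Hj'; rewrite (U_step S) // w_col //.
  have := IHt (ltnW lt) j0 Hj0; lra.
move: tH; case: t => [|t] lt.
  have := b0 i0 j Hi0 Hj; lra.
have := next t lt j Hj; rewrite (U_step S) // w_col //.
have := A_le i0 j; rewrite ler_norml => /andP[h1 h2]; lra.
Qed.

Lemma vector_system_window s L i0 : (s + L <= H)%N -> ~ maximal_in_window I V s L i0 ->
  vector_system A (I :\ i0) J (fun t => V (s + t)) (fun t => U (s + t))
    (fun t => w (s + t)) (fun t => u (s + t)) L.
Proof.
case: S => wg wo ws wb ug uo us ub Vs Us le never_max.
have lt t : (t < L)%N -> (s + t < H)%N by move=> tL; rewrite (leq_trans _ le) // ltn_add2l.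
split.
- by move=> t i /lt; apply: wg.
- move=> t i tL; rewrite in_setD1 negb_and negbK => /orP[/eqP->|]; last exact: wo (lt t tL).
  apply/eqP; apply: contra_notT never_max => nz; exists (s + t).
    by rewrite leq_addr leq_add2l ltnW.
  by move=> i' Hi'; apply: wb (lt t tL) nz Hi'.
- by move=> t /lt; apply: ws.
- by move=> t i i' /lt tH nz /setD1P[_]; apply: wb.
- by move=> t j /lt; apply: ug.
- by move=> t j /lt; apply: uo.
- by move=> t /lt; apply: us.
- by move=> t j j' /lt; apply: ub.
- by move=> t i /lt; rewrite addnS; apply: Vs.
- by move=> t j /lt; rewrite addnS; apply: Us.
Qed.

Lemma spread_le_window_start s i0 K : spread_le I J V U s K ->
  spread_le (I :\ i0) J (fun t => V (s + t)) (fun t => U (s + t)) 0 K.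
Proof. by move=> b i j /setD1P[_ Hi] Hj; rewrite addn0; apply: b. Qed.

Lemma spread_le_window_end s L i0 K : ~ maximal_in_window I V s L i0 ->
  spread_le (I :\ i0) J (fun t => V (s + t)) (fun t => U (s + t)) L K ->
  spread_le I J V U (s + L) K.
Proof.
move=> never_max b i j Hi Hj; have [->|ne] := eqVneq i i0; last first.
  by apply: b => //; rewrite in_setD1 ne.
have [i' Hi' ltV] : exists2 i', i' \in I & V (s + L) i0 < V (s + L) i'.
  apply: contrapT => no_i'; apply: never_max; exists (s + L); first by rewrite leq_addr leqnn.
  by move=> i' Hi'; rewrite leNgt; apply/negP => ltV; apply: no_i'; exists i'.
have Hi'' : i' \in I :\ i0 by rewrite in_setD1 Hi' andbT; apply: contraTneq ltV => ->; rewrite ltxx.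
by have := b i' j Hi'' Hj; rewrite /=; lra.
Qed.

End VectorSystem.

Section VectorSystemBounds.
Variables (T1 T2 : finType) (A : T1 -> T2 -> R) (I : {set T1}) (J : {set T2}).
Variables (V : nat -> T1 -> R) (U : nat -> T2 -> R) (w : nat -> T1 -> R) (u : nat -> T2 -> R).
Variables (H : nat) (a : R).
Hypothesis S : vector_system A I J V U w u H.
Hypothesis A_le : forall i j, `|A i j| <= a.

Let S' := vector_system_dual S.
Let A_le' : forall j i, `|- A i j| <= a. Proof. by move=> j i; rewrite normrN. Qed.

Lemma U_drift tau d j : (tau + d <= H)%N -> `|U (tau + d) j - U tau j| <= d%:R * a.
Proof.
move=> le; have := V_drift S' A_le' j le.
by rewrite !ler_norml => /andP[h1 h2]; apply/andP; split; lra.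
Qed.

Lemma U_cumul t j : (t <= H)%N -> U t j = U 0 j + \sum_i occupation w t i * A i j.
Proof.
move=> le; apply: oppr_inj; rewrite (V_cumul S' j le) opprD -sumrN.
by congr (_ + _); apply: eq_bigr => i _; rewrite mulNr mulrC.
Qed.

Lemma spread_le_drift s d K : (s + d <= H)%N -> spread_le I J V U s K ->
  spread_le I J V U (s + d) (K + 2 * (d%:R * a)).
Proof.
move=> le b i j Hi Hj.
have := V_drift S A_le i le; have := U_drift j le.
rewrite !ler_norml => /andP[h1 h2] /andP[h3 h4]; have := b i j Hi Hj; lra.
Qed.

Lemma spread_le_small K : 0 <= a -> (#|I| <= 1)%N || (#|J| <= 1)%N ->
  spread_le I J V U 0 K -> forall t, (t <= H)%N -> spread_le I J V U t (K + 2 * a).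
Proof.
move=> a0 /orP[I1 | J1] b0 t tH; first exact: (spread_le_single_row S A_le).
apply/spread_le_dual; apply: (spread_le_single_row S' A_le') => //.
exact/spread_le_dual.
Qed.

(* The zero-sum structure: weighting the spread by the empirical frequencies
   of both players cancels the accumulated payoffs. *)
Lemma weighted_spread_invariant t : (t <= H)%N ->
  \sum_i \sum_j occupation w t i * occupation u t j * (V t i - U t j) =
  \sum_i \sum_j occupation w t i * occupation u t j * (V 0 i - U 0 j).
Proof.
move=> le; set X := occupation w t; set Y := occupation u t.
have lt tau : (tau < t)%N -> (tau < H)%N by move=> /leq_trans; apply.
have XT : \sum_i X i = t%:R by apply: sum_occupation => tau /lt; apply: (w_sum1 S).
have YT : \sum_j Y j = t%:R by apply: sum_occupation => tau /lt; apply: (u_sum1 S).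
have XV : \sum_i X i * V t i = \sum_i X i * V 0 i + \sum_i \sum_j X i * A i j * Y j.
  rewrite -big_split; apply: eq_bigr => i _; rewrite (V_cumul S) // mulrDr mulr_sumr.
  by congr (_ + _); apply: eq_bigr => j _; rewrite mulrA.
have YU : \sum_j Y j * U t j = \sum_j Y j * U 0 j + \sum_i \sum_j X i * A i j * Y j.
  rewrite exchange_big /= -big_split; apply: eq_bigr => j _.
  rewrite U_cumul // mulrDr mulr_sumr.
  by congr (_ + _); apply: eq_bigr => i _; rewrite mulrC.
by rewrite !sum_pair_diff XT YT XV YU; ring.
Qed.

Lemma spread_lower_le T K lo : (0 < T)%N -> (T <= H)%N -> spread_le I J V U 0 K ->
  (forall i j, i \in I -> j \in J -> lo <= V T i - U T j) -> lo <= K.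
Proof.
move=> T0 TH b0 lo_le; pose X := occupation w T; pose Y := occupation u T.
have lt tau : (tau < T)%N -> (tau < H)%N by move=> /leq_trans; apply.
have X0 i : 0 <= X i by apply: occupation_ge0 => tau /lt; apply: (w_ge0 S).
have Y0 j : 0 <= Y j by apply: occupation_ge0 => tau /lt; apply: (u_ge0 S).
have XI i : i \notin I -> X i = 0 by move=> Hi; apply: occupation_eq0 => tau /lt /(w_out S); apply.
have YJ j : j \notin J -> Y j = 0 by move=> Hj; apply: occupation_eq0 => tau /lt /(u_out S); apply.
have XT : \sum_i X i = T%:R by apply: sum_occupation => tau /lt; apply: (w_sum1 S).
have YT : \sum_j Y j = T%:R by apply: sum_occupation => tau /lt; apply: (u_sum1 S).
have := ler_sum_pair X0 Y0 XI YJ (f := fun _ _ => lo) lo_le.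
rewrite weighted_spread_invariant // => lo_avg.
have := le_trans lo_avg (ler_sum_pair X0 Y0 XI YJ (g := fun _ _ => K) b0).
by rewrite !sum_pair_const XT YT ler_pM2l // mulr_gt0 ?ltr0n.
Qed.

Lemma spread_le_eligible s L K : 0 <= a -> (0 < s + L)%N -> (s + L <= H)%N ->
  spread_le I J V U 0 K ->
  (forall i, i \in I -> maximal_in_window I V s L i) ->
  (forall j, j \in J -> maximal_in_window J (fun t j => - U t j) s L j) ->
  spread_le I J V U (s + L) (K + 4 * (L%:R * a)).
Proof.
move=> a0 sL0 sLH b0 row_max col_min.
have drift tau : (s <= tau <= s + L)%N -> [/\ (tau + (s + L - tau))%N = (s + L)%N,
    (tau + (s + L - tau) <= H)%N & (s + L - tau)%:R * a <= L%:R * a].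
  move=> /andP[h1 h2]; rewrite subnKC //; split=> //.
  by apply: ler_wpM2r => //; rewrite ler_nat; lia.
have near_V tau i : (s <= tau <= s + L)%N -> `|V (s + L) i - V tau i| <= L%:R * a.
  move=> /drift[eT le dL]; have := V_drift S A_le i le; rewrite eT => h.
  exact: le_trans h dL.
have near_U tau j : (s <= tau <= s + L)%N -> `|U (s + L) j - U tau j| <= L%:R * a.
  move=> /drift[eT le dL]; have := U_drift j le; rewrite eT => h.
  exact: le_trans h dL.
move=> i0 j0 Hi0 Hj0; rewrite -lerBlDr.
apply: (spread_lower_le sL0 sLH b0) => i j Hi Hj.
have [t1 w1 m1] := row_max i Hi; have [t2 w2 m2] := col_min j Hj.
have := m1 i0 Hi0; have := m2 j0 Hj0.
have := near_V t1 i w1; have := near_V t1 i0 w1.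
have := near_U t2 j w2; have := near_U t2 j0 w2.
by rewrite !ler_norml => /andP[? ?] /andP[? ?] /andP[? ?] /andP[? ?] ? ?; lra.
Qed.

End VectorSystemBounds.

Definition robinson_bound (k : nat) : Prop :=
  forall (T1 T2 : finType) (A : T1 -> T2 -> R) (I : {set T1}) (J : {set T2})
    (V : nat -> T1 -> R) (U : nat -> T2 -> R) (w : nat -> T1 -> R) (u : nat -> T2 -> R)
    (H : nat) (a K : R) (N t : nat),
  vector_system A I J V U w u H -> 0 <= a -> (forall i j, `|A i j| <= a) ->
  (#|I| + #|J|)%N = k -> spread_le I J V U 0 K ->
  (0 < N)%N -> (t <= H)%N -> (t <= N ^ (k - 2))%N ->
  spread_le I J V U t (K + 4 * a * k%:R * (N ^ (k - 3))%N%:R).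

(* A row that is never maximal during a window of length [N ^ (k - 2)] can be
   dropped, so that the induction hypothesis applies on that window. *)
Lemma spread_le_drop_row k (IH : robinson_bound k) (T1 T2 : finType)
    (A : T1 -> T2 -> R) (I : {set T1}) (J : {set T2}) V U w u H a K N s i0 :
  vector_system A I J V U w u H -> 0 <= a -> (forall i j, `|A i j| <= a) ->
  (#|I| + #|J|)%N = k.+1 -> (0 < N)%N -> i0 \in I -> (s + N ^ (k - 2) <= H)%N ->
  ~ maximal_in_window I V s (N ^ (k - 2)) i0 ->
  spread_le I J V U s K ->
  spread_le I J V U (s + N ^ (k - 2)) (K + 4 * a * k%:R * (N ^ (k - 3))%N%:R).
Proof.
move=> S a0 A_le card N0 Hi0 le never_max bs.
apply: (spread_le_window_end never_max).
have card' : (#|I :\ i0| + #|J|)%N = k.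
  by move: card; rewrite (cardsD1 i0 I) Hi0 add1n addSn => -[].
have S' := vector_system_window S le never_max.
by apply: (IH _ _ _ _ _ _ _ _ _ _ _ _ _ _ S') => //; apply: spread_le_window_start.
Qed.

Lemma spread_le_drop_col k (IH : robinson_bound k) (T1 T2 : finType)
    (A : T1 -> T2 -> R) (I : {set T1}) (J : {set T2}) V U w u H a K N s j0 :
  vector_system A I J V U w u H -> 0 <= a -> (forall i j, `|A i j| <= a) ->
  (#|I| + #|J|)%N = k.+1 -> (0 < N)%N -> j0 \in J -> (s + N ^ (k - 2) <= H)%N ->
  ~ maximal_in_window J (fun t j => - U t j) s (N ^ (k - 2)) j0 ->
  spread_le I J V U s K ->
  spread_le I J V U (s + N ^ (k - 2)) (K + 4 * a * k%:R * (N ^ (k - 3))%N%:R).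
Proof.
move=> S a0 A_le card N0 Hj0 le never_min bs; apply/spread_le_dual.
apply: (spread_le_drop_row IH (vector_system_dual S)) Hj0 le _ _ => //.
- by move=> j i; rewrite normrN.
- by rewrite addnC.
- exact/spread_le_dual.
Qed.

Section InductionStep.
Variable k : nat.
Hypothesis IH : robinson_bound k.
Variables (T1 T2 : finType) (A : T1 -> T2 -> R) (I : {set T1}) (J : {set T2}).
Variables (V : nat -> T1 -> R) (U : nat -> T2 -> R) (w : nat -> T1 -> R) (u : nat -> T2 -> R).
Variables (H : nat) (a K : R) (N : nat).
Hypothesis S : vector_system A I J V U w u H.
Hypothesis a0 : 0 <= a.
Hypothesis A_le : forall i j, `|A i j| <= a.
Hypothesis card_IJ : (#|I| + #|J|)%N = k.+1.
Hypothesis N0 : (0 < N)%N.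
Hypothesis b0 : spread_le I J V U 0 K.

Let L := (N ^ (k - 2))%N.
Let b := 4 * a * k%:R * (N ^ (k - 3))%N%:R.

Let L0 : (0 < L)%N. Proof. by rewrite expn_gt0 N0. Qed.
Let b_ge0 : 0 <= b. Proof. by rewrite !mulr_ge0 ?ler0n. Qed.

(* On a window of length [L] either some row is never maximal, or some
   column never minimal, or all of them are eligible. *)
Lemma spread_le_window_step K' s : (s + L <= H)%N -> K + 4 * (L%:R * a) <= K' ->
  spread_le I J V U s K' -> spread_le I J V U (s + L) (K' + b).
Proof.
move=> le KK' bs.
have [[i0 Hi0 never_max]|row_max] :=
  pselect (exists2 i0, i0 \in I & ~ maximal_in_window I V s L i0).
  exact (spread_le_drop_row IH S a0 A_le card_IJ N0 Hi0 le never_max bs).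
have [[j0 Hj0 never_min]|col_min] :=
  pselect (exists2 j0, j0 \in J & ~ maximal_in_window J (fun t j => - U t j) s L j0).
  exact (spread_le_drop_col IH S a0 A_le card_IJ N0 Hj0 le never_min bs).
apply: spread_leW (spread_le_eligible S A_le a0 _ le b0 _ _).
- by move: b_ge0; lra.
- by rewrite addn_gt0 L0 orbT.
- by move=> i Hi; apply: contrapT => never; apply: row_max; exists i.
- by move=> j Hj; apply: contrapT => never; apply: col_min; exists j.
Qed.

Lemma spread_le_blocks m t : (t <= H)%N -> (t < m.+1 * L)%N ->
  spread_le I J V U t (K + 4 * (L%:R * a) + m%:R * b).
Proof.
elim: m t => [|m IHm] t tH tL.
  have := spread_le_drift S A_le (s := 0) (d := t) _ b0; rewrite add0n => /(_ tH) bt.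
  apply: spread_leW bt; rewrite mul0r addr0 lerD2l.
  have : t%:R * a <= L%:R * a by rewrite ler_wpM2r // ler_nat ltnW // -[L]mul1n.
  by move: (mulr_ge0 (ler0n R t) a0); lra.
have [lt|ge] := ltnP t (m.+1 * L).
  apply: spread_leW (IHm t tH lt).
  by rewrite lerD2l ler_wpM2r // ler_nat.
set s := (t - L)%N.
have ts : t = (s + L)%N by rewrite subnK // (leq_trans _ ge) // leq_pmull.
rewrite mulSn in tL.
have -> : K + 4 * (L%:R * a) + m.+1%:R * b = K + 4 * (L%:R * a) + m%:R * b + b.
  by rewrite -[m.+1%:R]natr1; ring.
rewrite ts; apply: spread_le_window_step.
- by rewrite -ts.
- by rewrite lerDl mulr_ge0.
- by apply: IHm; lia.
Qed.

End InductionStep.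

Lemma robinson_boundP k : robinson_bound k.
Proof.
elim: k => [|k IHk] T1 T2 A I J V U w u H a K N t S a0 A_le card b0 N0 tH tN.
  move=> i j Hi; suff : (0 < #|I|)%N by lia.
  by apply/card_gt0P; exists i.
have [small|] := boolP ((#|I| <= 1)%N || (#|J| <= 1)%N).
  apply: spread_leW (spread_le_small S A_le a0 small b0 tH).
  have X1 : 1 <= k.+1%:R * (N ^ (k.+1 - 3))%N%:R :> R.
    by rewrite -natrM ler1n muln_gt0 expn_gt0 N0.
  have : a * 1 <= a * (k.+1%:R * (N ^ (k.+1 - 3))%N%:R) by rewrite ler_wpM2l.
  by rewrite lerD2l -(mulrA (4 * a)); lra.
rewrite negb_or -!ltnNge => /andP[I2 J2].
have k3 : (3 <= k)%N by lia.
have NL1 : (N ^ (k.+1 - 2) = N * N ^ (k - 2))%N by rewrite -expnS; congr expn; lia.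
have NL2 : (N ^ (k - 2) = N * N ^ (k - 3))%N by rewrite -expnS; congr expn; lia.
have tL : (t < N.+1 * N ^ (k - 2))%N by move: tN; rewrite NL1 mulSn; lia.
apply: spread_leW (spread_le_blocks IHk S a0 A_le card N0 b0 tH tL).
rewrite NL2 !natrM -[k.+1%:R]natr1 le_eqVlt; apply/orP; left; apply/eqP; ring.
Qed.

End Robinson.

Lemma average_step (R : numFieldType) (V : lmodType R) (z s : nat -> V) t :
  z t.+1 = (1 - t.+1%:R^-1) *: z t + t.+1%:R^-1 *: s t ->
  t.+1%:R *: z t.+1 = t%:R *: z t + s t.
Proof.
move=> ->; have nz : t.+1%:R != 0 :> R by rewrite pnatr_eq0.
by rewrite scalerDr !scalerA mulrBr mulr1 mulfV // scale1r -[t.+1%:R]natr1 addrK.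
Qed.

Lemma convex_min_support (R : realFieldType) (T : finType) (c w : T -> R) j :
  (forall k, 0 <= w k) -> \sum_k w k = 1 -> (forall l, \sum_k w k * c k <= c l) ->
  w j != 0 -> forall l, c j <= c l.
Proof.
move=> w0 w1 w_opt nz l.
have [k _ k_min] := arg_minP c (P := xpredT) (i0 := j) isT.
have excess_le0 : \sum_i w i * (c i - c k) <= 0.
  under eq_bigr do rewrite mulrBr.
  by rewrite sumrB -mulr_suml w1 mul1r subr_le0.
have : w j * (c j - c k) <= \sum_i w i * (c i - c k).
  rewrite (bigD1 j) //= lerDl sumr_ge0 // => i _.
  by rewrite mulr_ge0 // subr_ge0 k_min.
move=> /le_trans /(_ excess_le0); rewrite pmulr_rle0 ?lt_def ?nz ?w0 // subr_le0.
by move=> /le_trans; apply; apply: k_min.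
Qed.

Lemma root_grid (R : realType) (e t : nat) : (0 < t)%N ->
  exists N : nat, [/\ (0 < N)%N, (t <= N ^ e.+1)%N &
    (N ^ e)%:R / t%:R <= 2 ^+ e * t%:R `^ (- e.+1%:R^-1) :> R].
Proof.
move=> t0; pose r : R := t%:R `^ e.+1%:R^-1.
have r_exp : r ^+ e.+1 = t%:R.
  by rewrite /r -powR_mulrn ?powR_ge0 // -powRrM mulVf ?pnatr_eq0 // powRr1.
have r1 : 1 <= r.
  have := @ge0_ler_powR R e.+1%:R^-1 _ 1 t%:R.
  by rewrite powR1 => ->; rewrite ?invr_ge0 ?nnegrE ?ler0n ?ler1n.
have r0 : 0 < r by apply: lt_le_trans r1.
pose N := (Num.truncn r).+1.
have N_le : N%:R <= 2 * r.
  rewrite /N -[_.+1%:R]natr1; have := truncn_le r; rewrite (ltW r0) => trunc_le; lra.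
exists N; split => //.
  rewrite -(ler_nat R) natrX -r_exp; apply: lerXn2r; rewrite ?nnegrE ?ltW //.
  exact: truncnS_gt.
rewrite powRN -/r -r_exp exprSr natrX invfM mulrA.
apply: ler_wpM2r; first by rewrite invr_ge0 ltW.
rewrite ler_pdivrMr ?exprn_gt0 // -exprMn; apply: lerXn2r => //.
- by rewrite nnegrE ler0n.
- by rewrite nnegrE mulr_ge0 // ltW.
Qed.

Local Open Scope classical_set_scope.

Section Bilinear.
Variables (R : realType) (n m : nat) (M : 'M[R]_(n, m)).

Lemma bilinDl x1 x2 y : bilin M (x1 + x2) y = bilin M x1 y + bilin M x2 y.
Proof. by rewrite /bilin linearD /= !mulmxDl mxE. Qed.

Lemma bilinZl c x y : bilin M (c *: x) y = c * bilin M x y.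
Proof. by rewrite /bilin linearZ /= -!scalemxAl mxE. Qed.

Lemma bilinDr x y1 y2 : bilin M x (y1 + y2) = bilin M x y1 + bilin M x y2.
Proof. by rewrite /bilin mulmxDr mxE. Qed.

Lemma bilinZr c x y : bilin M x (c *: y) = c * bilin M x y.
Proof. by rewrite /bilin -scalemxAr mxE. Qed.

Lemma bilin_suml p (c : 'I_p -> R) v y :
  bilin M (\sum_i c i *: v i) y = \sum_i c i * bilin M (v i) y.
Proof.
apply: (big_rec2 (fun a b => bilin M a y = b)).
  by rewrite /bilin linear0 !mul0mx mxE.
by move=> i a b _ <-; rewrite bilinDl bilinZl.
Qed.

Lemma bilin_sumr p (c : 'I_p -> R) v x :
  bilin M x (\sum_i c i *: v i) = \sum_i c i * bilin M x (v i).
Proof.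
apply: (big_rec2 (fun a b => bilin M x a = b)); first by rewrite /bilin mulmx0 mxE.
by move=> i a b _ <-; rewrite bilinDr bilinZr.
Qed.

Lemma dotv_mulmx x y : dotv x (M *m y) = bilin M x y.
Proof. by rewrite /dotv /bilin mulmxA. Qed.

Lemma dotv_trmx_mulmx x y : dotv y (M^T *m x) = bilin M x y.
Proof.
rewrite /dotv /bilin (_ : y^T *m (M^T *m x) = (x^T *m M *m y)^T) ?mxE //.
by rewrite !trmx_mul trmxK.
Qed.

End Bilinear.

Definition hull_coords (R : realType) n p (v : 'I_p -> 'cV[R]_n) (w : 'I_p -> R)
    (z : 'cV[R]_n) : Prop :=
  [/\ forall i, 0 <= w i, \sum_i w i = 1 & z = \sum_i w i *: v i].

Lemma conv_hull_choice (R : realType) n p (v : 'I_p -> 'cV[R]_n) (s : nat -> 'cV[R]_n) :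
  (forall t, conv_hull v (s t)) -> exists w, forall t, hull_coords v (w t) (s t).
Proof.
move=> s_in; have s_coords t : exists w, hull_coords v w (s t).
  by have [w [w0 [w1 sw]]] := s_in t; exists w.
by have [w w_s] := boolp.choice s_coords; exists w.
Qed.

Lemma conv_hull_vertex (R : realType) n p (v : 'I_p -> 'cV[R]_n) j : conv_hull v (v j).
Proof.
exists (fun k => (k == j)%:R); split=> [k|]; first by rewrite ler0n.
split; first by rewrite (bigD1 j) //= eqxx big1 ?addr0 // => k /negbTE ->.
by rewrite (bigD1 j) //= eqxx scale1r big1 ?addr0 // => k /negbTE ->; rewrite scale0r.
Qed.

Lemma gap_le (R : realType) n m p q (vX : 'I_p -> 'cV[R]_n) (vY : 'I_q -> 'cV[R]_m)
    (M : 'M[R]_(n, m)) x y B :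
  conv_hull vX !=set0 -> conv_hull vY !=set0 ->
  (forall i j, bilin M x (vY i) - bilin M (vX j) y <= B) ->
  gap M (conv_hull vX) (conv_hull vY) x y <= B.
Proof.
move=> [x0 X0] [y0 Y0] B_ge.
have hull_le y' x' : conv_hull vY y' -> conv_hull vX x' -> bilin M x y' - bilin M x' y <= B.
  move=> [b [b0 [b1 ->]]] [c [c0 [c1 ->]]]; rewrite bilin_sumr bilin_suml.
  suff : \sum_i b i * bilin M x (vY i) - B <= \sum_j c j * bilin M (vX j) y by lra.
  apply: convex_sum_ge => // j _; rewrite lerBlDr.
  by apply: convex_sum_le => // i _; have := B_ge i j; lra.
have sup_ne : [set bilin M x y' | y' in conv_hull vY] !=set0 by exists (bilin M x y0), y0.
have inf_ne : [set bilin M x' y | x' in conv_hull vX] !=set0 by exists (bilin M x0 y), x0.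
rewrite /gap lerBlDr -lerBlDl; apply: lb_le_inf inf_ne _ => _ [x' Hx' <-].
rewrite lerBlDl; apply: ge_sup sup_ne _ => _ [y' Hy' <-].
by have := hull_le y' x' Hy' Hx'; lra.
Qed.

Section FictitiousPlay.
Variables (R : realType) (n m p q : nat).
Variables (vX : 'I_p -> 'cV[R]_n) (vY : 'I_q -> 'cV[R]_m) (M : 'M[R]_(n, m)).
Variables (x : nat -> 'cV[R]_n) (y : nat -> 'cV[R]_m).
Variables (sx : nat -> 'cV[R]_n) (sy : nat -> 'cV[R]_m).

Let payoff (i : 'I_q) (j : 'I_p) := bilin M (vX j) (vY i).
Let V t (i : 'I_q) := t%:R * bilin M (x t) (vY i).
Let U t (j : 'I_p) := t%:R * bilin M (vX j) (y t).

Lemma spfw_spread0 : spread_le [set: 'I_q]%SET [set: 'I_p]%SET V U 0 0.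
Proof. by move=> i j _ _; rewrite /V /U !mul0r subrr. Qed.

Hypothesis run : spfw_run M (conv_hull vX) (conv_hull vY) x y sx sy.

Lemma fw_best_x t j : bilin M (sx t) (y t) <= bilin M (vX j) (y t).
Proof.
case: run => _ [_ /(_ t)[_ Hsy fw_opt _ _]].
by have := fw_opt (vX j) (sy t) (conv_hull_vertex vX j) Hsy; rewrite !dotv_mulmx; lra.
Qed.

Lemma fw_best_y t i : bilin M (x t) (vY i) <= bilin M (x t) (sy t).
Proof.
case: run => _ [_ /(_ t)[Hsx _ fw_opt _ _]].
by have := fw_opt (sx t) (vY i) Hsx (conv_hull_vertex vY i); rewrite !dotv_trmx_mulmx; lra.
Qed.

Lemma spfw_vector_system_of_coords wx wy H :
  (forall t, hull_coords vX (wx t) (sx t)) -> (forall t, hull_coords vY (wy t) (sy t)) ->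
  vector_system payoff [set: 'I_q]%SET [set: 'I_p]%SET V U wy wx H.
Proof.
move=> wx_sx wy_sy; rewrite /payoff /V /U.
split=> [t i _|t i _|t _|t i i' _ nz _|t j _|t j _|t _|t j j' _ nz _|t i _|t j _].
- by case: (wy_sy t).
- by rewrite inE.
- by case: (wy_sy t).
- rewrite ler_wpM2l //; case: (wy_sy t) => w0 w1 sy_eq; rewrite -lerN2.
  apply: (convex_min_support (c := fun k => - bilin M (x t) (vY k)) w0 w1 _ nz) => l.
  under eq_bigr do rewrite mulrN.
  by rewrite sumrN -bilin_sumr -sy_eq lerN2 fw_best_y.
- by case: (wx_sx t).
- by rewrite inE.
- by case: (wx_sx t).
- rewrite ler_wpM2l //; case: (wx_sx t) => w0 w1 sx_eq.
  apply: (convex_min_support (c := fun k => bilin M (vX k) (y t)) w0 w1 _ nz) => l.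
  by rewrite -bilin_suml -sx_eq fw_best_x.
- have x_step : t.+1%:R *: x t.+1 = t%:R *: x t + sx t.
    by apply: average_step; case: run => _ [_ /(_ t)[]].
  rewrite -!bilinZl x_step bilinDl; case: (wx_sx t) => _ _ ->.
  by rewrite bilin_suml; congr (_ + _); apply: eq_bigr => j _; rewrite mulrC.
- have y_step : t.+1%:R *: y t.+1 = t%:R *: y t + sy t.
    by apply: average_step; case: run => _ [_ /(_ t)[]].
  rewrite -!bilinZr y_step bilinDr; case: (wy_sy t) => _ _ ->.
  by rewrite bilin_sumr.
Qed.

(* With step sizes [1/(t+1)], [t x_t] and [t y_t] are the sums of the
   Frank-Wolfe vertices chosen so far: SP-FW is fictitious play on the
   vertices, with accumulated payoffs [t L(x_t, vY i)] and [t L(vX j, y_t)]. *)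
Lemma spfw_vector_system : exists wy wx, forall H,
  vector_system payoff [set: 'I_q]%SET [set: 'I_p]%SET V U wy wx H.
Proof.
have [_ [_ steps]] := run.
have [wx wx_sx] : exists wx, forall t, hull_coords vX (wx t) (sx t).
  by apply: conv_hull_choice => t; case: (steps t).
have [wy wy_sy] : exists wy, forall t, hull_coords vY (wy t) (sy t).
  by apply: conv_hull_choice => t; case: (steps t).
by exists wy, wx => H; apply: spfw_vector_system_of_coords.
Qed.

Lemma spfw_gap_le t B : (0 < t)%N -> spread_le [set: 'I_q]%SET [set: 'I_p]%SET V U t B ->
  gap M (conv_hull vX) (conv_hull vY) (x t) (y t) <= B / t%:R.
Proof.
move=> t0 spread_t; case: run => x0_in [y0_in _].
apply: gap_le; [by exists (x 0%N) | by exists (y 0%N) | move=> i j].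
have := spread_t i j; rewrite !inE /V /U => /(_ isT isT).
by rewrite ler_pdivlMr ?ltr0n //; lra.
Qed.

End FictitiousPlay.

Theorem corollary5 (R : realType) (n m p q : nat)
  (vX : 'I_p -> 'cV[R]_n) (vY : 'I_q -> 'cV[R]_m) (M : 'M[R]_(n, m))
  (x : nat -> 'cV[R]_n) (y : nat -> 'cV[R]_m)
  (sx : nat -> 'cV[R]_n) (sy : nat -> 'cV[R]_m) :
  vertices_of_hull vX -> vertices_of_hull vY ->
  spfw_run M (conv_hull vX) (conv_hull vY) x y sx sy ->
  exists C : R, exists T : nat, forall t : nat, (T <= t)%N ->
    gap M (conv_hull vX) (conv_hull vY) (x t) (y t)
      <= C * (t%:R `^ (- ((p + q - 2)%N%:R)^-1)).
Proof.
move=> _ _ run.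
have [wy [wx S]] := spfw_vector_system run.
have [a a0 A_le] := exists_norm_bound (fun (i : 'I_q) (j : 'I_p) => bilin M (vX j) (vY i)).
have spread0 := spfw_spread0 vX vY M x y.
have [pq_le2|pq_gt2] := leqP (p + q) 2.
  have small : (#|[set: 'I_q]%SET| <= 1)%N || (#|[set: 'I_p]%SET| <= 1)%N.
    by rewrite !cardsT !card_ord; apply/orP; lia.
  exists (2 * a), 1%N => t t1.
  have := spread_le_small (S t) A_le a0 small spread0 (leqnn t).
  move=> /(spfw_gap_le run t1) /le_trans; apply.
  rewrite add0r (_ : p + q - 2 = 0)%N ?invr0 ?oppr0 ?powRr0 ?mulr1; last by lia.
  by rewrite ler_pdivrMr ?ltr0n // ler_peMr ?mulr_ge0 // ler1n.
have [e pq] : exists e, (p + q = e.+3)%N by exists (p + q - 3)%N; lia.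
have card : (#|[set: 'I_q]%SET| + #|[set: 'I_p]%SET|)%N = e.+3.
  by rewrite !cardsT !card_ord addnC.
exists (4 * a * e.+3%:R * 2 ^+ e), 1%N => t t1.
have [N [N0 tN NtN]] := root_grid R e t1.
have := robinson_boundP (S t) a0 A_le card spread0 N0 (leqnn t) tN.
move=> /(spfw_gap_le run t1) /le_trans; apply; rewrite add0r pq !subSS !subn0.
have c0 : 0 <= 4 * a * e.+3%:R by rewrite !mulr_ge0 ?ler0n.
by have := ler_wpM2l c0 NtN; rewrite !mulrA.
Qed.
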